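(* For the anonymous MIS algorithm described in the context, under the adversarial distributed daemon and from any initial configuration, the execution reaches a stable configuration (one in which no rule is enabled on any node) with probability $1$, whatever the strategy of the daemon.
   Context: $G=(V,E)$ is a finite simple undirected graph; $N(u)$ is the open neighbourhood of $u$. Nodes are anonymous. A configuration assigns to each node $u$ a value $s_u\in\{\bot,\top\}$. A rule ''guard $\to$ command'' is enabled on $u$ in $\gamma$ if its guard holds there. A transition $\gamma\xrightarrow{t}\gamma'$ is given by a nonempty set $t$ of moves $(u,r)$ with $r$ enabled on $u$ in $\gamma$, at most one per node, all executed simultaneously from the values in $\gamma$ with independent random choices; other nodes keep their values. An execution is a sequence of consecutive transitions, stopping only at a stable configuration. The adversarial distributed daemon may choose, at each step and depending on the whole past, any valid nonempty set $t$ (no fairness constraint). The algorithm has the rules: (Candidacy) $s_u=\bot\wedge\forall v\in N(u),\ s_v=\bot\ \to\ s_u:=\top$. (Withdrawal?) $s_u=\top\wedge\exists v\in N(u),\ s_v=\top\ \to$ with probability $\frac12$ (independently) set $s_u:=\bot$, otherwise leave it unchanged. *)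

From HB Require Import structures.
From mathcomp Require Import all_boot all_order all_algebra.
From mathcomp Require Import all_classical all_reals all_analysis.
Set Implicit Arguments. Unset Strict Implicit. Unset Printing Implicit Defensive.
Import Order.TTheory GRing.Theory Num.Theory.
Local Open Scope ring_scope.

(* A configuration assigns to each node a value; true = ⊤, false = ⊥. *)
Definition config (T : finType) := {ffun T -> bool}.

Section MIS.
Variables (T : finType) (e : rel T).

Definition cand_enabled (s : config T) (u : T) : bool :=
  ~~ s u && [forall v, e u v ==> ~~ s v].

Definition withd_enabled (s : config T) (u : T) : bool :=
  s u && [exists v, e u v && s v].

Definition enabled (s : config T) (u : T) : bool :=
  cand_enabled s u || withd_enabled s u.

Definition enabled_set (s : config T) : {set T} := [set u | enabled s u].

Definition stable (s : config T) : bool := [forall u, ~~ enabled s u].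

(* A (deterministic, history-dependent) daemon strategy: given the whole
   past execution (the nonempty sequence of configurations so far, the last
   one being the current configuration), it chooses the set of activated
   nodes.  At most one rule is enabled on a node, so a set of moves is the
   same as a set of (enabled) nodes. *)
Definition daemon := seq (config T) -> {set T}.

Definition valid_daemon (d : daemon) : Prop :=
  forall (s0 : config T) (h : seq (config T)),
    ~~ stable (last s0 h) ->
    d (s0 :: h) != finset.set0 /\ d (s0 :: h) \subset enabled_set (last s0 h).

Variable R : realType.

Definition local_prob (s : config T) (t : {set T}) (u : T) (b : bool) : R :=
  if (u \in t) && cand_enabled s u then (b == true)%:R
  else if (u \in t) && withd_enabled s u then 2%:R^-1
  else (b == s u)%:R.

Definition trans_prob (s : config T) (t : {set T}) (s' : config T) : R :=
  \prod_(u : T) local_prob s t u (s' u).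

(* reach_prob d n s0 h = probability, under daemon d, that the execution whose
   past is s0 :: h reaches a stable configuration within n further steps
   (the execution stops exactly at stable configurations). *)
Fixpoint reach_prob (d : daemon) (n : nat) (s0 : config T) (h : seq (config T))
  : R :=
  if stable (last s0 h) then 1 else
  match n with
  | 0 => 0
  | n'.+1 => \sum_(s' : config T)
               trans_prob (last s0 h) (d (s0 :: h)) s' * reach_prob d n' s0 (rcons h s')
  end.

End MIS.

From HB Require Import structures.
From mathcomp Require Import all_boot all_order all_algebra.
From mathcomp Require Import all_classical all_reals all_analysis.
From mathcomp Require Import zify lra ring.
Set Implicit Arguments. Unset Strict Implicit. Unset Printing Implicit Defensive.
Import Order.TTheory GRing.Theory Num.Theory.
Import numFieldNormedType.Exports.

(* Let the potential of a configuration encode, lexicographically, "many connected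
   components of the ⊤ nodes, then few ⊤ nodes".  From any unstable configuration,
   whatever set of nodes the daemon activates, some outcome of the coin flips has
   strictly smaller potential: if a candidacy is activated, the new ⊤ nodes are not
   adjacent to the old ones and form new components; otherwise only withdrawals are
   activated, and the outcome where exactly one of them withdraws keeps every component
   alive (the withdrawing node has a ⊤ neighbour) while removing a ⊤ node.  That outcome
   has probability at least 2^-|V|.  Since the potential is bounded by some B, every
   block of B steps ends in a stable configuration with probability at least
   2^(-|V| B), so the probability of not being stable after k B steps is at most
   (1 - 2^(-|V| B))^k. *)

Lemma leq_card_imset_factor (aT rT1 rT2 : finType) (D : {set aT})
    (f : aT -> rT1) (h : aT -> rT2) :
  {in D &, forall x y, h x = h y -> f x = f y} -> #|f @: D| <= #|h @: D|.
Proof.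
move=> fh; have [->|[x0 x0D]] := set_0Vmem D; first by rewrite imset0 cards0.
pose g K := if [pick x in D | h x == K] is Some x then f x else f x0.
suff -> : f @: D = g @: (h @: D) by apply: leq_imset_card.
rewrite -imset_comp; apply: eq_in_imset => x xD /=; rewrite /g.
case: pickP => [y /andP[yD /eqP hyx]|/(_ x)]; first exact: fh.
by rewrite xD eqxx.
Qed.

Section InducedComponents.
Variables (T : finType) (e : rel T).
Implicit Types (A B C : {set T}) (x y : T).

Definition induced (A : {set T}) : rel T :=
  fun x y => [&& e x y, x \in A & y \in A].

Definition component (A : {set T}) x : {set T} := [set y in A | connect (induced A) x y].

Definition ncomp (A : {set T}) : nat := #|[set component A x | x in A]|.

Lemma mem_component A x : x \in A -> x \in component A x.
Proof. by move=> xA; rewrite inE xA connect0. Qed.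

Lemma component_sub A x : component A x \subset A.
Proof. by apply/fintype.subsetP => y; rewrite inE => /andP[]. Qed.

Lemma ncomp_le_card A : ncomp A <= #|A|.
Proof. exact: leq_imset_card. Qed.

Lemma connect_induced_sub A B x y :
  A \subset B -> connect (induced A) x y -> connect (induced B) x y.
Proof.
move=> /fintype.subsetP sAB; apply: connect_sub => u v /and3P[euv uA vA].
by apply: connect1; rewrite /induced euv !sAB.
Qed.

Lemma connect_induced_setU A C x y :
  (forall a c, a \in A -> c \in C -> ~~ e a c) -> x \in A ->
  connect (induced (A :|: C)) x y -> (y \in A) && connect (induced A) x y.
Proof.
move=> nAC xA /connectP[p pp ->]; elim: p x xA pp => [|z p IHp] x xA /=.
  by rewrite xA connect0.
case/andP => /and3P[exz _ zAC] pp.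
have zA : z \in A.
  by case/setUP: zAC => // zC; rewrite (negbTE (nAC _ _ xA zC)) in exz.
case/andP: (IHp z zA pp) => -> czl; apply: connect_trans czl.
by apply: connect1; rewrite /induced exz xA zA.
Qed.

Lemma ncomp_setU_nonadjacent A C c :
  [disjoint A & C] -> (forall a c, a \in A -> c \in C -> ~~ e a c) ->
  c \in C -> ncomp A < ncomp (A :|: C).
Proof.
move=> dAC nAC cC.
have componentU x : x \in A -> component (A :|: C) x = component A x.
  move=> xA; apply/setP => y; rewrite !inE; apply/andP/andP => [[_ cxy]|[yA cxy]].
    exact/andP/(connect_induced_setU nAC xA cxy).
  by rewrite yA; split=> //; apply: connect_induced_sub cxy; apply: finset.subsetUl.
apply/proper_card/properP; split.
  apply/fintype.subsetP => K /imsetP[x xA ->]; apply/imsetP.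
  by exists x; rewrite ?componentU ?inE ?xA.
exists (component (A :|: C) c); first by apply/imsetP; exists c; rewrite ?inE ?cC ?orbT.
apply/imsetP => -[x xA Ecx].
have /(fintype.subsetP (component_sub A x)) cA : c \in component A x.
  by rewrite -Ecx mem_component // inE cC orbT.
by rewrite (disjointFr dAC cA) in cC.
Qed.

Hypothesis e_sym : symmetric e.

Lemma induced_sym A : symmetric (induced A).
Proof. by move=> x y; rewrite /induced e_sym [(x \in A) && _]andbC. Qed.

Lemma component_eq A x y : y \in component A x -> component A y = component A x.
Proof.
rewrite inE => /andP[yA cxy]; apply/setP => z; rewrite !inE.
case: (z \in A) => //=; apply/idP/idP; first exact: connect_trans.
by apply: connect_trans; rewrite (sym_connect_sym (@induced_sym A)).
Qed.

(* The component of [w] survives through its neighbour [v]; the others can only split. *)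
Lemma ncomp_setD1 A w v :
  w \in A -> v \in A -> v != w -> e w v -> ncomp A <= ncomp (A :\ w).
Proof.
move=> wA vA vw ewv; have sAw := subD1set A w; rewrite /ncomp.
have -> : [set component A x | x in A] = [set component A x | x in A :\ w].
  apply/eqP; rewrite finset.eqEsubset (imsetS _ sAw) andbT.
  apply/fintype.subsetP => _ /imsetP[x xA ->].
  apply/imsetP; have [->|xw] := eqVneq x w; last by exists x; rewrite // !inE xw.
  exists v; first by rewrite !inE vw.
  by apply/esym/component_eq; rewrite inE vA connect1 // /induced ewv wA vA.
apply: leq_card_imset_factor => x y xAw yAw Exy; apply/esym/component_eq.
have : y \in component (A :\ w) x by rewrite Exy mem_component.
rewrite !inE => /andP[/andP[_ yA] cxy]; rewrite yA.
exact: connect_induced_sub cxy.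
Qed.

End InducedComponents.

Section Potential.
Variables (T : finType) (e : rel T).
Hypotheses (e_sym : symmetric e) (e_irr : irreflexive e).
Implicit Types (s : config T) (t C : {set T}).

Definition tops s : {set T} := [set u | s u].

Definition potential s : nat :=
  #|T|.+1 * (#|T| - ncomp e (tops s)) + #|tops s|.

Definition max_potential : nat := #|T|.+1 * #|T| + #|T|.

Lemma potential_le s : potential s <= max_potential.
Proof. by apply: leq_add; [rewrite leq_mul2l leq_subr orbT | apply: max_card]. Qed.

Lemma potential_lt_setU s s' C c :
  tops s' = tops s :|: C -> [disjoint tops s & C] ->
  (forall a b, a \in tops s -> b \in C -> ~~ e a b) -> c \in C ->
  potential s' < potential s.
Proof.
move=> Es' dC nC cC; have := ncomp_setU_nonadjacent dC nC cC; rewrite -Es' /potential.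
have := leq_trans (ncomp_le_card e (tops s')) (max_card _).
have := max_card (tops s'); nia.
Qed.

Lemma potential_lt_setD1 s s' w v :
  tops s' = tops s :\ w -> s w -> s v -> e w v -> potential s' < potential s.
Proof.
move=> Es' sw sv ewv; have vw : v != w by apply: contraTneq ewv => ->; rewrite e_irr.
have := ncomp_setD1 e_sym (_ : w \in tops s) (_ : v \in tops s) vw ewv.
rewrite !inE -Es' => /(_ sw sv) le_ncomp.
have lt_card : #|tops s'| < #|tops s| by rewrite Es' (cardsD1 w (tops s)) inE sw.
by rewrite /potential -addnS leq_add // leq_mul2l leq_sub2l.
Qed.

(* If a candidacy is activated, let exactly the activated candidates move;
   otherwise every activated node can withdraw, and we let only one of them do so. *)
Lemma potential_decreasing_successor s t :
  t != finset.set0 -> t \subset enabled_set e s ->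
  exists s', [/\ potential s' < potential s, {in [predC t], s' =1 s}
                & {in t, forall u, cand_enabled e s u -> s' u}].
Proof.
move=> /set0Pn[w wt] sub_t.
have [/existsP[c /andP[ct cc]]|no_cand] := boolP [exists u, (u \in t) && cand_enabled e s u].
  pose C := [set u in t | cand_enabled e s u].
  exists [ffun u => (u \in C) || s u]; split.
  - apply: (@potential_lt_setU s _ C c); last by rewrite inE ct.
    + by apply/finset.setP => u; rewrite /C !inE ffunE orbC inE.
    + rewrite disjoint_subset; apply/fintype.subsetP => u; rewrite /C !inE /cand_enabled.
      by case: (s u); rewrite ?andbF.
    + move=> a b; rewrite !inE /cand_enabled => sa /and3P[_ _ /forallP/(_ a)].
      by rewrite e_sym sa implybF.
  - by move=> u; rewrite inE ffunE inE => /negbTE ->.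
  - by move=> u ut cu; rewrite ffunE inE ut cu.
have cand_w : cand_enabled e s w = false.
  by apply: negbTE; apply: contra no_cand => cw; apply/existsP; exists w; rewrite wt.
move: (fintype.subsetP sub_t w wt); rewrite inE /enabled cand_w /withd_enabled.
case/andP=> sw /existsP[v /andP[ewv sv]].
exists [ffun u => (u != w) && s u]; split.
- apply: (@potential_lt_setD1 s _ w v) => //.
  by apply/finset.setP => u; rewrite !inE ffunE.
- by move=> u; rewrite !inE ffunE; case: eqP => // -> /negP.
- move=> u ut cu; apply: contraNT no_cand => _.
  by apply/existsP; exists u; rewrite ut cu.
Qed.

End Potential.

Local Open Scope classical_set_scope.
Local Open Scope ring_scope.

Section TransitionProbability.
Variables (R : realType) (T : finType) (e : rel T).
Implicit Types (s : config T) (t : {set T}).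

Lemma local_prob_ge0 s t u b : 0 <= local_prob e R s t u b.
Proof. by rewrite /local_prob; do 2?case: ifP => _; rewrite ?invr_ge0 ?ler0n. Qed.

Lemma local_prob_sum s t u : \sum_(b : bool) local_prob e R s t u b = 1.
Proof.
rewrite big_bool /= /local_prob; case: ifP => _; first by rewrite addr0.
by case: ifP => _; [lra | case: (s u); rewrite /= ?addr0 ?add0r].
Qed.

Lemma trans_prob_ge0 s t (s' : config T) : 0 <= trans_prob e R s t s'.
Proof. by apply: prodr_ge0 => u _; apply: local_prob_ge0. Qed.

Lemma trans_prob_sum s t : \sum_s' trans_prob e R s t s' = 1.
Proof.
rewrite /trans_prob -(bigA_distr_bigA (fun u b => local_prob e R s t u b)).
by apply: big1 => u _; apply: local_prob_sum.
Qed.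

Lemma local_prob_ge_half s t u b :
  (u \in t -> enabled e s u) -> (u \notin t -> b = s u) ->
  (u \in t -> cand_enabled e s u -> b) -> 2^-1 <= local_prob e R s t u b.
Proof.
move=> en_u off_t on_t; rewrite /local_prob.
have half_le1 : 2^-1 <= 1 :> R by rewrite invf_le1 ?ler1n ?ltr0n.
have [ut|ut] := boolP (u \in t); rewrite /=; last by rewrite off_t // eqxx.
case: ifP => [cu|ncu]; first by rewrite on_t.
by case: ifP => // nwu; move: (en_u ut); rewrite /enabled ncu nwu.
Qed.

Lemma trans_prob_ge s t (s' : config T) :
  t \subset enabled_set e s -> {in [predC t], s' =1 s} ->
  {in t, forall u, cand_enabled e s u -> s' u} ->
  2^-1 ^+ #|T| <= trans_prob e R s t s'.
Proof.
move=> sub_t off_t on_t; rewrite /trans_prob -prodr_const.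
apply: ler_prod => u _; rewrite invr_ge0 ler0n; apply: local_prob_ge_half.
- by move=> ut; have := fintype.subsetP sub_t u ut; rewrite inE.
- by move=> ut; apply: off_t; rewrite inE.
- exact: on_t.
Qed.

End TransitionProbability.

Section Reachability.
Variables (R : realType) (T : finType) (e : rel T) (d : daemon T) (s0 : config T).
Implicit Types (h : seq (config T)) (r : R).

Local Notation reach n h := (reach_prob e R d n s0 h).
Local Notation next h := (trans_prob e R (last s0 h) (d (s0 :: h))).

Lemma reach_prob_stable n h : stable e (last s0 h) -> reach n h = 1.
Proof. by case: n => [|n] /= ->. Qed.

Lemma reach_prob_unstable n h : ~~ stable e (last s0 h) ->
  reach n.+1 h = \sum_s' next h s' * reach n (rcons h s').
Proof. by move=> /negbTE /= ->. Qed.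

Lemma reach_prob_ge0 n h : 0 <= reach n h.
Proof.
elim: n h => [|n IHn] h /=; case: ifP => // _.
by apply: sumr_ge0 => s' _; rewrite mulr_ge0 ?trans_prob_ge0.
Qed.

Lemma reach_prob_le1 n h : reach n h <= 1.
Proof.
elim: n h => [|n IHn] h /=; case: ifP => // _.
rewrite -(trans_prob_sum R e (last s0 h) (d (s0 :: h))); apply: ler_sum => s' _.
by rewrite ler_piMr ?trans_prob_ge0.
Qed.

Lemma reach_prob_nondecreasing h :
  {homo (fun n => reach n h) : m n / (m <= n)%N >-> m <= n}.
Proof.
apply/nondecreasing_seqP => n; elim: n h => [|n IHn] h.
all: have [st|unst] := boolP (stable e (last s0 h)); first by rewrite !reach_prob_stable.
all: rewrite reach_prob_unstable //.
  rewrite /= (negbTE unst); apply: sumr_ge0 => s' _.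
  by apply: mulr_ge0; [exact: trans_prob_ge0 | exact: (reach_prob_ge0 0)].
rewrite (reach_prob_unstable n.+1) //; apply: ler_sum => s' _.
by rewrite ler_wpM2l ?trans_prob_ge0.
Qed.

Lemma reach_prob_succ_ge n h r s1 : ~~ stable e (last s0 h) ->
  (forall s', r <= reach n (rcons h s')) ->
  r + next h s1 * (reach n (rcons h s1) - r) <= reach n.+1 h.
Proof.
move=> unst r_le; rewrite reach_prob_unstable //.
have -> : \sum_s' next h s' * reach n (rcons h s') =
    r + \sum_s' next h s' * (reach n (rcons h s') - r).
  rewrite -[X in X + _]mulr1 -(trans_prob_sum R e (last s0 h) (d (s0 :: h))).
  by rewrite mulr_sumr -big_split; apply: eq_bigr => s' _ /=; ring.
rewrite lerD2l (bigD1 s1) //= lerDl.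
by apply: sumr_ge0 => s' _; rewrite mulr_ge0 ?trans_prob_ge0 ?subr_ge0.
Qed.

Hypotheses (e_sym : symmetric e) (e_irr : irreflexive e) (d_valid : valid_daemon e d).

Let c : R := 2^-1 ^+ #|T|.

Lemma half_pow_card_gt0 : 0 < c.
Proof. by rewrite exprn_gt0 // invr_gt0 ltr0n. Qed.

Lemma half_pow_card_le1 : c <= 1.
Proof. by rewrite exprn_ile1 ?invr_ge0 ?ler0n ?invf_le1 ?ler1n ?ltr0n. Qed.

Lemma likely_potential_decrease h : ~~ stable e (last s0 h) ->
  exists s1, (potential e s1 < potential e (last s0 h))%N /\ c <= next h s1.
Proof.
move=> /d_valid[t_n0 sub_t].
have [s1 [pot_lt off_t on_t]] := potential_decreasing_successor e_sym e_irr t_n0 sub_t.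
by exists s1; split; last exact: trans_prob_ge.
Qed.

(* Every unstable configuration has a successor of smaller potential, chosen with
   probability at least [c]; an unstable configuration has positive potential. *)
Lemma reach_prob_failure_le m n h r : (forall h', r <= reach n h') ->
  (potential e (last s0 h) <= m)%N -> 1 - reach (m + n) h <= (1 - c ^+ m) * (1 - r).
Proof.
move=> r_le; elim: m h => [|m IHm] h pot_le.
  have [st|unst] := boolP (stable e (last s0 h)).
    by rewrite reach_prob_stable // expr0 !subrr mul0r.
  have [s1 [pot_lt _]] := likely_potential_decrease unst.
  by move: (leq_trans pot_lt pot_le).
have r_le1 : r <= 1 := le_trans (r_le h) (reach_prob_le1 _ _).
have cm_ge0 k : 0 <= c ^+ k by rewrite exprn_ge0 ?ltW ?half_pow_card_gt0.
have [st|unst] := boolP (stable e (last s0 h)).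
  rewrite reach_prob_stable // subrr mulr_ge0 ?subr_ge0 //.
  by apply: exprn_ile1; [exact: ltW half_pow_card_gt0 | exact: half_pow_card_le1].
have [s1 [pot_lt c_le]] := likely_potential_decrease unst.
have := IHm (rcons h s1); rewrite last_rcons => /(_ (leq_trans pot_lt pot_le)) IH1.
have r_le_succ s' : r <= reach (m + n) (rcons h s').
  by apply: le_trans (r_le _) (reach_prob_nondecreasing _ (leq_addl m n)).
have := reach_prob_succ_ge s1 unst r_le_succ; rewrite -addSn.
set x := reach (m + n) (rcons h s1); set P := next h s1.
have : c * (c ^+ m * (1 - r)) <= P * (x - r).
  apply: ler_pM; rewrite ?mulr_ge0 ?cm_ge0 ?subr_ge0 ?(ltW half_pow_card_gt0) //.
  by move: IH1; rewrite /x; lra.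
rewrite exprS; lra.
Qed.

Local Notation B := (max_potential T).

Lemma reach_prob_failure_geometric k h : 1 - reach (k * B) h <= (1 - c ^+ B) ^+ k.
Proof.
elim: k h => [|k IHk] h; first by rewrite expr0 lerBlDr lerDl reach_prob_ge0.
have r_le h' : 1 - (1 - c ^+ B) ^+ k <= reach (k * B) h' by rewrite lerBlDl -lerBlDr.
have := reach_prob_failure_le r_le (potential_le e (last s0 h)).
by rewrite mulSn exprS; lra.
Qed.

End Reachability.

Lemma cvg_to1_of_geometric_failure (R : realType) (u : nat -> R) (B : nat) (q : R) :
  0 <= q < 1 -> {homo u : m n / (m <= n)%N >-> m <= n} -> (forall n, u n <= 1) ->
  (forall k, 1 - u (k * B)%N <= q ^+ k) -> u n @[n --> \oo] --> (1 : R).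
Proof.
move=> /andP[q_ge0 q_lt1] u_homo u_le1 u_geometric; apply/cvgrPdist_lt => eps eps_gt0.
have norm_q : `|q| < 1 by rewrite ger0_norm.
have [k _ qk_lt] := (cvgrPdist_lt _ _).1 (cvg_expr norm_q) eps eps_gt0.
exists (k * B)%N => // n /= kB_le_n.
rewrite ger0_norm ?subr_ge0 //; have := u_homo _ _ kB_le_n.
have := qk_lt k (leqnn k); rewrite /= sub0r normrN ger0_norm ?exprn_ge0 //.
by have := u_geometric k; lra.
Qed.

Theorem mainTheorem18 (R : realType) (T : finType) (e : rel T)
  (e_sym : symmetric e) (e_irr : irreflexive e)
  (d : daemon T) (d_valid : valid_daemon e d) (s0 : config T) :
  reach_prob e R d n s0 [::] @[n --> \oo] --> (1 : R).
Proof.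
set c : R := 2^-1 ^+ #|T|.
have cB_gt0 : 0 < c ^+ max_potential T by rewrite exprn_gt0 ?half_pow_card_gt0.
have cB_le1 : c ^+ max_potential T <= 1.
  by apply: exprn_ile1; [exact: ltW (half_pow_card_gt0 R T) | exact: half_pow_card_le1].
apply: (@cvg_to1_of_geometric_failure _ _ (max_potential T) (1 - c ^+ max_potential T)).
- by apply/andP; split; lra.
- exact: reach_prob_nondecreasing.
- by move=> n; apply: reach_prob_le1.
- by move=> k; rewrite /c; apply: reach_prob_failure_geometric.
Qed.
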